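(* Let $R$ be a commutative ring and $S$ a multiplicative subset of $R$ consisting of non-zero-divisors. If $R$ is a $u$-$S$-Artinian ring, then $R$ is an Artinian ring.
   Context: An $R$-module $M$ is $u$-$S$-Artinian (with respect to $s$) if there exists $s\in S$ such that for every descending chain $M_1\supseteq M_2\supseteq\cdots$ of submodules of $M$ there is $k\ge1$ with $sM_k\subseteq M_n$ for all $n\ge k$. $R$ is a $u$-$S$-Artinian ring if it is $u$-$S$-Artinian as an $R$-module. *)

From mathcomp Require Import all_boot all_algebra.
Set Implicit Arguments. Unset Strict Implicit. Unset Printing Implicit Defensive.
Import GRing.Theory.
Local Open Scope ring_scope.

(* Submodules of R viewed as an R-module = ideals of R (as Prop predicates). *)
Definition is_ideal (R : comPzRingType) (I : R -> Prop) : Prop :=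
  [/\ I 0, (forall x y, I x -> I y -> I (x + y)) & (forall r x, I x -> I (r * x))].

(* Descending chain I 0 ⊇ I 1 ⊇ ... of ideals (indexing from 0 instead of 1). *)
Definition descending_ideal_chain (R : comPzRingType) (I : nat -> R -> Prop) : Prop :=
  (forall n, is_ideal (I n)) /\ (forall n x, I n.+1 x -> I n x).

Definition multiplicative_subset (R : comPzRingType) (S : R -> Prop) : Prop :=
  S 1 /\ (forall s t, S s -> S t -> S (s * t)).

Definition non_zero_divisors_only (R : comPzRingType) (S : R -> Prop) : Prop :=
  forall s, S s -> forall r : R, s * r = 0 -> r = 0.

Definition u_S_Artinian_ring (R : comPzRingType) (S : R -> Prop) : Prop :=
  exists2 s, S s &
    forall I : nat -> R -> Prop, descending_ideal_chain I ->
      exists2 k : nat, (0 < k)%N &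
        forall n : nat, (k <= n)%N -> forall x, I k x -> I n (s * x).

Definition Artinian_ring (R : comPzRingType) : Prop :=
  forall I : nat -> R -> Prop, descending_ideal_chain I ->
    exists k : nat, forall n : nat, (k <= n)%N -> forall x, I n x <-> I k x.

From mathcomp Require Import all_boot all_algebra.
Set Implicit Arguments. Unset Strict Implicit. Unset Printing Implicit Defensive.
Import GRing.Theory.
Local Open Scope ring_scope.

(* The uniform element s is a unit: applied to the chain s^n R it gives
   s^(k+1) = s^(k+2) a, and cancelling the non-zero-divisor s^(k+1) yields
   s a = 1.  Then for any chain, s I_k ⊆ I_n implies I_k = s^-1 (s I_k) ⊆ I_n. *)

Section IdealChains.

Variable R : comPzRingType.

Lemma descending_ideal_chain_le (I : nat -> R -> Prop) :
  descending_ideal_chain I -> forall m n x, (m <= n)%N -> I n x -> I m x.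
Proof.
move=> [_ IS] m n x /subnKC <-; elim: (n - m)%N x => [|d IHd] x.
  by rewrite addn0.
by rewrite addnS => /IS /IHd.
Qed.

Definition principal_power_ideal (s : R) (n : nat) (y : R) : Prop :=
  exists r, y = s ^+ n * r.

Lemma principal_power_chain (s : R) :
  descending_ideal_chain (principal_power_ideal s).
Proof.
split=> [n|n x [a ->]]; last by exists (s * a); rewrite exprSr -mulrA.
split=> [|x y [a ->] [b ->]|r x [a ->]].
- by exists 0; rewrite mulr0.
- by exists (a + b); rewrite mulrDr.
- by exists (r * a); rewrite mulrCA.
Qed.

End IdealChains.

Lemma multiplicative_subset_exp (R : comPzRingType) (S : R -> Prop) (s : R) :
  multiplicative_subset S -> S s -> forall n, S (s ^+ n).
Proof.
move=> [S1 SM] Ss; elim=> [|n IHn]; first by rewrite expr0.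
by rewrite exprS; apply: SM.
Qed.

Lemma u_S_Artinian_witness_invertible (R : comPzRingType) (S : R -> Prop) (s : R) :
  multiplicative_subset S -> non_zero_divisors_only S -> S s ->
  (forall I : nat -> R -> Prop, descending_ideal_chain I ->
     exists2 k : nat, (0 < k)%N &
       forall n : nat, (k <= n)%N -> forall x, I k x -> I n (s * x)) ->
  exists r, s * r = 1.
Proof.
move=> mulS nzdS Ss sArt.
have [k _ sJk] := sArt _ (principal_power_chain s).
have [a sk_eq] : principal_power_ideal s k.+2 (s * s ^+ k).
  by apply: sJk; [rewrite ltnW | exists 1; rewrite mulr1].
exists a; apply/eqP; rewrite eq_sym -subr_eq0; apply/eqP.
apply: (nzdS _ (multiplicative_subset_exp mulS Ss k.+1)).
by rewrite mulrBr mulr1 mulrA -exprSr exprS sk_eq subrr.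
Qed.

Theorem proposition3p2 (R : comPzRingType) (S : R -> Prop) :
  multiplicative_subset S -> non_zero_divisors_only S ->
  u_S_Artinian_ring S -> Artinian_ring R.
Proof.
move=> mulS nzdS [s Ss sArt].
have [r sr1] := u_S_Artinian_witness_invertible mulS nzdS Ss sArt.
move=> I chainI; have [k _ sIk] := sArt I chainI.
exists k => n kn x; split; first exact: descending_ideal_chain_le.
move=> /(sIk n kn); have [/(_ n) [_ _ idealM] _] := chainI.
by move=> /(idealM r); rewrite mulrA (mulrC r) sr1 mul1r.
Qed.
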